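(* If a sign string $S$ and a state string $J$ of length $n$ correspond to a dominant lattice path, then the growth algorithm applied to $(S,J)$ does not terminate until the sign and state strings have length $0$.
   Context: A sign string is $S=(s_1,\dots,s_n)\in\{+,-\}^n$ and a state string is $J=(j_1,\dots,j_n)\in\{-1,0,1\}^n$. Weights: let $\alpha_1,\alpha_2$ be the simple roots and $\mu^+,\mu^-$ the fundamental weights of $\mathfrak{sl}(3)$; put $\mathrm{wt}(e^+_1)=\mu^+$, $\mathrm{wt}(e^+_0)=\mu^+-\alpha_1$, $\mathrm{wt}(e^+_{-1})=\mu^+-\alpha_1-\alpha_2$, $\mathrm{wt}(e^-_1)=\mu^-$, $\mathrm{wt}(e^-_0)=\mu^--\alpha_2$, $\mathrm{wt}(e^-_{-1})=\mu^--\alpha_1-\alpha_2$. The pair $(S,J)$ determines the lattice path $\pi_0=0$, $\pi_k=\pi_{k-1}+\mathrm{wt}(e^{s_k}_{j_k})$; it is dominant if every $\pi_k$ is a nonnegative integral combination of $\mu^+,\mu^-$ and $\pi_n=0$. The growth algorithm builds an oriented planar graph downward from $n$ parallel strands, keeping a current pair (sign string, state string). A replacement acts on two adjacent positions $k,k+1$ with current signs $(s,s')$ and states $(j,j')$: (a) If $s'\ne s$: if $(j,j')=(1,0)$, $(0,0)$ or $(0,-1)$, attach an ''H'' (two trivalent vertices joined by a horizontal edge, each joined to its strand above and a new strand below); the new signs are $(s',s)$ and the new states respectively $(0,1)$, $(-1,1)$, $(-1,0)$. If $(j,j')=(1,-1)$, join the two strands by a cup and delete both positions. (b) If $s'=s$: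 if $(j,j')=(1,0)$, $(0,-1)$ or $(1,-1)$, attach a ''Y'' (the two strands meet at a trivalent vertex whose third edge continues downward); the two positions are replaced by one position with sign opposite to $s$ and state respectively $1$, $-1$, $0$. The algorithm repeatedly applies some applicable replacement and stops when none applies. *)

From Stdlib Require Import List ZArith Relations.
Import ListNotations.
Open Scope Z_scope.

Inductive sign := Plus | Minus.
Inductive state := S1 | S0 | Sm1.

Definition opp_sign (s : sign) : sign :=
  match s with Plus => Minus | Minus => Plus end.

(* Weights of sl(3) written in the basis of fundamental weights (mu+, mu-). *)
Definition weight := (Z * Z)%type.
Definition wadd (a b : weight) : weight := (fst a + fst b, snd a + snd b).
Definition wsub (a b : weight) : weight := (fst a - fst b, snd a - snd b).
Definition mu_plus  : weight := (1, 0).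
Definition mu_minus : weight := (0, 1).
(* simple roots via the Cartan matrix of sl(3): alpha1 = 2mu+ - mu-, alpha2 = -mu+ + 2mu- *)
Definition alpha1 : weight := (2, -1).
Definition alpha2 : weight := (-1, 2).

Definition wt (s : sign) (j : state) : weight :=
  match s, j with
  | Plus, S1  => mu_plus
  | Plus, S0  => wsub mu_plus alpha1
  | Plus, Sm1 => wsub (wsub mu_plus alpha1) alpha2
  | Minus, S1  => mu_minus
  | Minus, S0  => wsub mu_minus alpha2
  | Minus, Sm1 => wsub (wsub mu_minus alpha1) alpha2
  end.

Definition dominant_weight (w : weight) : Prop := 0 <= fst w /\ 0 <= snd w.

Fixpoint path_from (p : weight) (S : list sign) (J : list state) : list weight :=
  match S, J with
  | s :: S', j :: J' => p :: path_from (wadd p (wt s j)) S' J'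
  | _, _ => [p]
  end.

Definition lattice_path (S : list sign) (J : list state) : list weight :=
  path_from (0, 0) S J.

Definition endpoint (S : list sign) (J : list state) : weight :=
  last (lattice_path S J) (0, 0).

Definition dominant_path (S : list sign) (J : list state) : Prop :=
  length S = length J /\
  Forall dominant_weight (lattice_path S J) /\
  endpoint S J = (0, 0).

(* Local replacement rules on two adjacent positions with signs (s,s')
   and states (j,j'); the result is the new (sign string, state string)
   that replaces these two positions. *)
Inductive local_rule : sign -> sign -> state -> state ->
                       list sign -> list state -> Prop :=
  | rule_H1 s s' : s' <> s -> local_rule s s' S1 S0  [s'; s] [S0; S1]
  | rule_H2 s s' : s' <> s -> local_rule s s' S0 S0  [s'; s] [Sm1; S1]
  | rule_H3 s s' : s' <> s -> local_rule s s' S0 Sm1 [s'; s] [Sm1; S0]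
  | rule_cup s s' : s' <> s -> local_rule s s' S1 Sm1 [] []
  | rule_Y1 s : local_rule s s S1 S0  [opp_sign s] [S1]
  | rule_Y2 s : local_rule s s S0 Sm1 [opp_sign s] [Sm1]
  | rule_Y3 s : local_rule s s S1 Sm1 [opp_sign s] [S0].

Inductive growth_step : (list sign * list state) -> (list sign * list state) -> Prop :=
  | gstep S1' S2' J1' J2' s s' j j' Snew Jnew :
      length S1' = length J1' ->
      local_rule s s' j j' Snew Jnew ->
      growth_step (S1' ++ s :: s' :: S2', J1' ++ j :: j' :: J2')
                  (S1' ++ Snew ++ S2', J1' ++ Jnew ++ J2').

Definition growth_reachable := clos_refl_trans _ growth_step.

Definition growth_terminal (c : list sign * list state) : Prop :=
  forall c', ~ growth_step c c'.

(** Dominance of the lattice path is invariant under the growth algorithm: every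
    replacement keeps the total weight of the two positions it rewrites, and the
    new intermediate point of an H is again dominant.  At a terminal string the
    first state must be 1, since a path starting at 0 with state 0 or -1 leaves
    the dominant chamber; and a state 1 followed by a state 0 or -1 always admits
    an H, a Y or a cup, so every state is 1.  But steps of state 1 add [mu+] or
    [mu-], so such a path returns to 0 only when it is empty. *)

From Stdlib Require Import List ZArith Relations Lia.
Import ListNotations.
Open Scope Z_scope.

Fixpoint dominant_from (p : weight) (S : list sign) (J : list state) : Prop :=
  match S, J with
  | [], [] => p = (0, 0)
  | s :: S', j :: J' => dominant_weight p /\ dominant_from (wadd p (wt s j)) S' J'
  | _, _ => False
  end.

Lemma dominant_from_length p S J : dominant_from p S J -> length S = length J.
Proof.
  revert p J; induction S as [|s S IH]; intros p [|j J]; simpl; try tauto.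
  intros [_ H]; f_equal; exact (IH _ _ H).
Qed.

Lemma dominant_from_head p S J : dominant_from p S J -> dominant_weight p.
Proof.
  destruct S, J; simpl; try tauto.
  intros ->; unfold dominant_weight; simpl; lia.
Qed.

Lemma dominant_from_path p S J :
  length S = length J ->
  Forall dominant_weight (path_from p S J) ->
  last (path_from p S J) (0, 0) = (0, 0) ->
  dominant_from p S J.
Proof.
  revert p J; induction S as [|s S IH]; intros p [|j J] HL HF HE;
    simpl in *; try discriminate.
  - exact HE.
  - inversion HF; subst; split; auto.
    apply IH; auto.
    destruct S, J; simpl in *; try discriminate; exact HE.
Qed.

Lemma dominant_path_from_origin S J :
  dominant_path S J -> dominant_from (0, 0) S J.
Proof. intros [HL [HF HE]]; exact (dominant_from_path _ _ _ HL HF HE). Qed.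

Lemma local_rule_dominant s s' j j' Sn Jn S J p :
  local_rule s s' j j' Sn Jn ->
  dominant_from p (s :: s' :: S) (j :: j' :: J) ->
  dominant_from p (Sn ++ S) (Jn ++ J).
Proof.
  destruct p as [a b]; intros Hr [Hp [Hq Hrest]].
  pose proof (dominant_from_head _ _ _ Hrest) as Hr'.
  destruct Hr; destruct s; try destruct s'; try congruence;
    cbn [app dominant_from] in *; repeat split;
    unfold dominant_weight, wadd, wsub, mu_plus, mu_minus, alpha1, alpha2 in *;
    simpl in *; try lia;
    (refine (eq_rect _ (fun q => dominant_from q S J) Hrest _ _); f_equal; lia).
Qed.

Lemma growth_step_dominant p S J S' J' :
  growth_step (S, J) (S', J') ->
  dominant_from p S J -> dominant_from p S' J'.
Proof.
  inversion 1 as [S1' S2' J1' J2' s s' j j' Sn Jn HL Hr]; subst; clear H.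
  revert p J1' HL; induction S1' as [|x S1' IH]; intros p [|y J1'] HL;
    simpl in *; try discriminate.
  - exact (local_rule_dominant _ _ _ _ _ _ _ _ _ Hr).
  - intros [Hp H]; split; auto.
Qed.

Lemma growth_reachable_dominant p c c' :
  growth_reachable c c' ->
  dominant_from p (fst c) (snd c) -> dominant_from p (fst c') (snd c').
Proof.
  induction 1 as [[S J] [S' J'] Hstep| |]; auto.
  exact (growth_step_dominant _ _ _ _ _ Hstep).
Qed.

Lemma local_rule_after_S1 s s' j :
  j = S1 \/ exists Sn Jn, local_rule s s' S1 j Sn Jn.
Proof.
  destruct j; [now left | right..];
    destruct s, s'; do 2 eexists; solve [ constructor | constructor; discriminate ].
Qed.

Lemma terminal_states_S1 pS pJ s S J :
  length pS = length pJ -> length S = length J ->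
  growth_terminal (pS ++ s :: S, pJ ++ S1 :: J) ->
  Forall (eq S1) J.
Proof.
  revert pS pJ s J; induction S as [|s' S IH]; intros pS pJ s [|j J] HL HLS HT;
    simpl in *; try discriminate; [constructor|].
  assert (Hj : j = S1).
  { destruct (local_rule_after_S1 s s' j) as [|(Sn & Jn & Hr)]; [assumption|].
    destruct (HT _ (gstep pS S pJ J _ _ _ _ _ _ HL Hr)). }
  subst j; constructor; [reflexivity|].
  apply (IH (pS ++ [s]) (pJ ++ [S1]) s'); [rewrite !length_app; simpl; lia | lia |].
  now rewrite <- !app_assoc.
Qed.

Lemma dominant_first_state s j :
  dominant_weight (wadd (0, 0) (wt s j)) -> j = S1.
Proof.
  unfold dominant_weight, wadd, wt, wsub, mu_plus, mu_minus, alpha1, alpha2.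
  destruct s, j; simpl; intros; auto; lia.
Qed.

Lemma dominant_from_S1 p S J :
  dominant_from p S J -> Forall (eq S1) J ->
  fst p + snd p + Z.of_nat (length J) = 0.
Proof.
  revert p J; induction S as [|s S IH]; intros p [|j J] Hd HF; simpl in *; try tauto.
  - now subst.
  - inversion HF as [|? ? Hj HJ]; subst.
    specialize (IH _ _ (proj2 Hd) HJ); destruct s; simpl in IH; lia.
Qed.

Theorem lemma4 (S : list sign) (J : list state) :
  dominant_path S J ->
  forall S' J', growth_reachable (S, J) (S', J') ->
  growth_terminal (S', J') ->
  S' = nil /\ J' = nil.
Proof.
  intros Hdom S' J' Hreach Hterm.
  pose proof (growth_reachable_dominant _ _ _ Hreach
                (dominant_path_from_origin _ _ Hdom)) as Hd; simpl in Hd.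
  destruct S' as [|s S'], J' as [|j J']; try (simpl in Hd; tauto).
  assert (j = S1) as ->
    by exact (dominant_first_state _ _ (dominant_from_head _ _ _ (proj2 Hd))).
  pose proof (terminal_states_S1 [] [] s S' J' eq_refl
                (dominant_from_length _ _ _ (proj2 Hd)) Hterm) as HS1.
  pose proof (dominant_from_S1 _ _ _ Hd (Forall_cons _ eq_refl HS1)) as Hsum.
  simpl in Hsum; lia.
Qed.
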